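(* Let $N\ge2$, $J=1$, let $h_0,h_1\in\mathbb{C}^N$ with $\|h_0\|=\|h_1\|=1$ and $h_0^{\sf H}h_1=\sin\tau\,e^{i\phi_z}$, where $\tau\in[0,\pi/2)$ and $\phi_z\in[0,2\pi)$; let $\sigma_0^2,\sigma_1^2,\sigma_n^2>0$ and $c_1=|c_1|e^{i\phi_c}$ with $|c_1|\le\sigma_0\sigma_1$, $\phi_c\in[0,2\pi)$. Then for all $\lambda\ge0$, \[ \mathrm{MSE}(\lambda)=\frac{|\delta_2|^2(\sigma_1^2\cos^2\tau+\sigma_n^2)}{g(\lambda)^2}-\frac{2\sigma_n^2\delta_1\tan\tau}{g(\lambda)}+\sigma_n^2(\tan^2\tau+1), \] where $g(\lambda):=\lambda\cos^2\tau+\sigma_1^2\cos^2\tau+\sigma_n^2$, $\delta_1:=\sigma_n^2\tan\tau-|c_1|\cos\tau\cos(\phi_c+\phi_z)$, $\delta_2:=\sigma_n^2\tan\tau-|c_1|\cos\tau\,e^{i(\phi_c+\phi_z)}$. Moreover: 1. If $\delta_2=0$ (hence $\delta_1=0$), then $\mathrm{MSE}(\lambda)=\sigma_n^2(\tan^2\tau+1)$ for all $\lambda\ge0$. 2. If $\delta_2\neq0$, let $\gamma:=\delta_1\sigma_n^2\tan\tau/|\delta_2|^2$. (a) If $\gamma\le0$ (equivalently $\delta_1\tan\tau\le0$), $\mathrm{MSE}(\lambda)$ is decreasing on $[0,\infty)$ and $\inf_{\lambda\ge0}\mathrm{MSE}(\lambda)=\lim_{\lambda\to\infty}\mathrm{MSE}(\lambda)=J_{\rm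 MSE}(w_{\rm ZF})$. (b) If $\gamma\ge1$, $\mathrm{MSE}(\lambda)$ is increasing on $[0,\infty)$ and minimized at $\lambda=0$. (c) If $\gamma\in(0,1)$, $\mathrm{MSE}$ is minimized over $[0,\infty)$ by $\lambda=\dfrac{\sigma_1^2\cos^2\tau+\sigma_n^2}{\cos^2\tau}\cdot\dfrac{1-\gamma}{\gamma}>0$.
   Context: Complex single-interference model: $y(k)=s_0(k)h_0+s_1(k)h_1+n(k)\in\mathbb{C}^N$, with zero-mean jointly weakly stationary complex signals $s_0,s_1$, $\sigma_j^2:=E|s_j(k)|^2$, $c_1:=E[s_0^*(k)s_1(k)]$, and noise $n(k)\sim\mathcal{CN}(0,\sigma_n^2I)$ uncorrelated with the signals. $R:=E[y(k)y(k)^{\sf H}]$. For $\lambda\ge0$, $R_\lambda:=R+\lambda h_1h_1^{\sf H}$ and the RZF beamformer is $w_{\rm RZF}(\lambda):=R_\lambda^{-1}h_0/(h_0^{\sf H}R_\lambda^{-1}h_0)$. The ZF beamformer is $w_{\rm ZF}:=R^{-1}H(H^{\sf H}R^{-1}H)^{-1}e_1$ with $H:=[h_0\ h_1]$, $e_1:=[1,0]^{\sf T}$. The MSE of $w$ is $J_{\rm MSE}(w):=E|w^{\sf H}y(k)-s_0(k)|^2$, and $\mathrm{MSE}(\lambda):=J_{\rm MSE}(w_{\rm RZF}(\lambda))$. *)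

From HB Require Import structures.
From mathcomp Require Import all_boot all_order all_algebra.
From mathcomp Require Import all_classical all_reals all_analysis.
From mathcomp Require Import complex.
Import Order.TTheory GRing.Theory Num.Theory.
Import numFieldNormedType.Exports.

Set Implicit Arguments.
Unset Strict Implicit.
Unset Printing Implicit Defensive.

Local Open Scope ring_scope.

Section RZF.
Variable R : realType.
Local Notation C := R[i].

Definition rc (x : R) : C := (x%:C)%C.

Definition expi (x : R) : C := Complex (cos x) (sin x).

Definition modc (z : C) : R := complex.Re `|z|.

Definition hermT m n (A : 'M[C]_(m, n)) : 'M[C]_(n, m) := (map_mx Num.conj A)^T.

Variable N : nat.
Implicit Types (w : 'cV[C]_N) (c : C).

(* Covariance R = E[y y^H] of y = s0 h0 + s1 h1 + n, with
   sigma_j^2 = s_j^2, c1 = E[s0^* s1] (so E[s1 s0^*] = c1, E[s0 s1^*] = c1^* ),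
   noise CN(0, sn^2 I) uncorrelated with the signals. *)
Definition covR (h0 h1 : 'cV[C]_N) (s0 s1 sn : R) (c1 : C) : 'M[C]_N :=
  rc (s0 ^+ 2) *: (h0 *m hermT h0) + Num.conj c1 *: (h0 *m hermT h1)
  + c1 *: (h1 *m hermT h0) + rc (s1 ^+ 2) *: (h1 *m hermT h1)
  + rc (sn ^+ 2) *: 1%:M.

(* cross-correlation E[y s0^*] = sigma_0^2 h0 + c1 h1 *)
Definition xcorr (h0 h1 : 'cV[C]_N) (s0 : R) (c1 : C) : 'cV[C]_N := rc (s0 ^+ 2) *: h0 + c1 *: h1.

(* J_MSE(w) = E|w^H y - s0|^2, expanded through second-order statistics:
   w^H R w - w^H r - r^H w + sigma_0^2  (a real number). *)
Definition JMSE (h0 h1 : 'cV[C]_N) (s0 s1 sn : R) (c1 : C) w : R :=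
  complex.Re ((hermT w *m covR h0 h1 s0 s1 sn c1 *m w) 0 0
              - (hermT w *m xcorr h0 h1 s0 c1) 0 0
              - (hermT (xcorr h0 h1 s0 c1) *m w) 0 0)
  + s0 ^+ 2.

Definition covRl (h0 h1 : 'cV[C]_N) (s0 s1 sn : R) (c1 : C) (l : R) : 'M[C]_N :=
  covR h0 h1 s0 s1 sn c1 + rc l *: (h1 *m hermT h1).

Definition wRZF (h0 h1 : 'cV[C]_N) (s0 s1 sn : R) (c1 : C) (l : R) : 'cV[C]_N :=
  let Ri := invmx (covRl h0 h1 s0 s1 sn c1 l) in
  ((hermT h0 *m Ri *m h0) 0 0)^-1 *: (Ri *m h0).

Definition wZF (h0 h1 : 'cV[C]_N) (s0 s1 sn : R) (c1 : C) : 'cV[C]_N :=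
  let Ri := invmx (covR h0 h1 s0 s1 sn c1) in
  let H := row_mx h0 h1 in
  Ri *m H *m invmx (hermT H *m Ri *m H) *m (delta_mx 0 0 : 'cV[C]_(1 + 1)).

Definition MSE (h0 h1 : 'cV[C]_N) (s0 s1 sn : R) (c1 : C) (l : R) : R :=
  JMSE h0 h1 s0 s1 sn c1 (wRZF h0 h1 s0 s1 sn c1 l).

End RZF.

From HB Require Import structures.
From mathcomp Require Import all_boot all_order all_algebra.
From mathcomp Require Import all_classical all_reals all_analysis.
From mathcomp Require Import complex.
From mathcomp Require Import ring lra.
Import Order.TTheory GRing.Theory Num.Theory.
Import numFieldNormedType.Exports.
Local Open Scope classical_set_scope.
Local Open Scope ring_scope.
Set Implicit Arguments.
Unset Strict Implicit.
Unset Printing Implicit Defensive.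

(* Apart from [sn^2 I], the covariance [R_l] is a sum of outer products of [h0] and [h1],
   so it preserves span{h0, h1}: [R_l^-1 h0] is an explicit combination [u_l] of [h0] and
   [h1] with [h0^H u_l = g(l)], and the ZF beamformer is the combination [w] with
   [h0^H w = 1] and [h1^H w = 0].  For a beamformer with [h0^H w = 1] the MSE is
   [s1^2 |w^H h1|^2 + sn^2 w^H w]; for [w = u_l / g(l)] this is the quadratic
   [|d2|^2 A x^2 - 2 B x + K] in [x = 1 / g(l)], with [A = s1^2 cos^2 tau + sn^2],
   [B = sn^2 d1 tan tau] and [K = J_MSE(w_ZF)].  As [l] runs over [0, +oo), [x] decreases
   from [1/A] to [0], while the vertex of the parabola is at [x = gam / A]; this gives the
   three regimes, the minimum being attained where [g(l) = A / gam]. *)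
HB.instance Definition _ (R : realType) :=
  GRing.RMorphism.copy (@rc R) (real_complex R).

Section PolarForm.
Variable R : realType.
Implicit Types p q r s x y : R.

Lemma conj_rc x : Num.conj (rc x) = rc x.
Proof. exact: conjc_real. Qed.

Lemma expi_mulconj x : expi x * Num.conj (expi x) = 1.
Proof.
rewrite /expi /=; apply/eqP; rewrite eq_complex /= -(cos2Dsin2 x).
by apply/andP; split; apply/eqP; ring.
Qed.

Lemma polar_mulconj r x : rc r * expi x * Num.conj (rc r * expi x) = rc (r ^+ 2).
Proof.
by rewrite rmorphM /= conj_rc mulrACA expi_mulconj mulr1 -rmorphM -expr2.
Qed.

Lemma polar_addconj r x s y :
  rc r * expi x * (rc s * expi y) + Num.conj (rc r * expi x) * Num.conj (rc s * expi y)
  = rc (2 * (r * s * cos (x + y))).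
Proof.
rewrite /expi /rc /=; apply/eqP; rewrite eq_complex /= cosD.
by apply/andP; split; apply/eqP; ring.
Qed.

Lemma Re_sub_polar p q x : complex.Re (rc p - rc q * expi x) = p - q * cos x.
Proof. by rewrite /= mul0r subr0. Qed.

Lemma modc_sub_polar p q x :
  modc (rc p - rc q * expi x) ^+ 2 = p ^+ 2 - 2 * p * q * cos x + q ^+ 2.
Proof.
rewrite /modc normc_def /= sqr_sqrtr ?addr_ge0 ?sqr_ge0 //.
transitivity (p ^+ 2 - 2 * p * q * cos x + q ^+ 2 * (cos x ^+ 2 + sin x ^+ 2)).
  by ring.
by rewrite cos2Dsin2 mulr1.
Qed.
End PolarForm.

Section HermitianForm.
Variable R : realType.
Local Notation C := R[i].

Lemma hermTM m n p (A : 'M[C]_(m, n)) (B : 'M[C]_(n, p)) :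
  hermT (A *m B) = hermT B *m hermT A.
Proof. by rewrite /hermT map_mxM trmx_mul. Qed.

Lemma hermTD m n (A B : 'M[C]_(m, n)) : hermT (A + B) = hermT A + hermT B.
Proof. by rewrite /hermT map_mxD linearD. Qed.

Lemma hermTZ m n a (A : 'M[C]_(m, n)) : hermT (a *: A) = Num.conj a *: hermT A.
Proof. by rewrite /hermT map_mxZ linearZ. Qed.

Lemma hermTK m n (A : 'M[C]_(m, n)) : hermT (hermT A) = A.
Proof. by apply/matrixP => i j; rewrite /hermT !mxE conjCK. Qed.

Lemma hermT0 m n : hermT (0 : 'M[C]_(m, n)) = 0.
Proof. by apply/matrixP => i j; rewrite /hermT !mxE conjC0. Qed.

Lemma hermTE m n (A : 'M[C]_(m, n)) i j : hermT A j i = Num.conj (A i j).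
Proof. by rewrite /hermT !mxE. Qed.

Lemma hermT_row_mx m n1 n2 (A1 : 'M[C]_(m, n1)) (A2 : 'M[C]_(m, n2)) :
  hermT (row_mx A1 A2) = col_mx (hermT A1) (hermT A2).
Proof. by rewrite /hermT map_row_mx tr_row_mx. Qed.

Variable N : nat.
Implicit Types u v w : 'cV[C]_N.

Definition hdot u v : C := (hermT u *m v) 0 0.

Lemma hdotC u v : hdot v u = Num.conj (hdot u v).
Proof. by rewrite /hdot -hermTE hermTM hermTK. Qed.

Lemma hdotDr u v w : hdot u (v + w) = hdot u v + hdot u w.
Proof. by rewrite /hdot mulmxDr mxE. Qed.

Lemma hdotZr u a v : hdot u (a *: v) = a * hdot u v.
Proof. by rewrite /hdot -scalemxAr mxE. Qed.

Lemma hdotDl u v w : hdot (v + w) u = hdot v u + hdot w u.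
Proof. by rewrite /hdot hermTD mulmxDl mxE. Qed.

Lemma hdotZl u a v : hdot (a *: v) u = Num.conj a * hdot v u.
Proof. by rewrite /hdot hermTZ -scalemxAl mxE. Qed.

Lemma hdot0r u : hdot u 0 = 0.
Proof. by rewrite /hdot mulmx0 mxE. Qed.

Lemma hdot_outer u v w : u *m hermT v *m w = hdot v w *: u.
Proof. by rewrite -mulmxA [hermT v *m w]mx11_scalar mul_mx_scalar. Qed.

Lemma hdotvv_ge0 v : 0 <= hdot v v.
Proof.
rewrite /hdot mxE; apply: sumr_ge0 => k _.
by rewrite hermTE mulrC mul_conjC_ge0.
Qed.

Lemma hdotvv_eq0 v : hdot v v = 0 -> v = 0.
Proof.
rewrite /hdot mxE => /eqP; rewrite psumr_eq0 => [/allP v0|k _]; last first.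
  by rewrite hermTE mulrC mul_conjC_ge0.
apply/matrixP => i j; rewrite (ord1 j) mxE.
by have := v0 i (mem_index_enum _); rewrite hermTE mulrC mul_conjC_eq0 => /eqP.
Qed.

Lemma row_mx_mul (h0 h1 : 'cV[C]_N) (x : 'cV[C]_(1 + 1)) :
  row_mx h0 h1 *m x = x (lshift 1 0) 0 *: h0 + x (rshift 1 0) 0 *: h1.
Proof.
rewrite -{1}[x]vsubmxK mul_row_col [usubmx x]mx11_scalar [dsubmx x]mx11_scalar.
by rewrite !mul_mx_scalar !mxE.
Qed.

Lemma trivial_ker_unitmx (A : 'M[C]_N) :
  (forall v, A *m v = 0 -> v = 0) -> A \in unitmx.
Proof.
move=> kerA; rewrite unitmxE unitfE -det_tr; apply/negP => /det0P [v v_neq0 vA].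
have : A *m v^T = 0 by rewrite -[A]trmxK -trmx_mul vA trmx0.
by move/kerA/(congr1 trmx); rewrite trmxK trmx0 => v0; rewrite v0 eqxx in v_neq0.
Qed.

Lemma normalized_invmx_mul (A : 'M[C]_N) (h u : 'cV[C]_N) d :
  A \in unitmx -> A *m u = d *: h -> hdot h u != 0 ->
  ((hermT h *m invmx A *m h) 0 0)^-1 *: (invmx A *m h) = (hdot h u)^-1 *: u.
Proof.
move=> A_unit Au hu_neq0.
have d_neq0 : d != 0.
  apply: contra hu_neq0 => /eqP d0.
  by rewrite -[u](mulKmx A_unit) Au d0 scale0r mulmx0 hdot0r.
have Vh : invmx A *m h = d^-1 *: u.
  by rewrite -[u](mulKmx A_unit) Au scalemxAr scalerA mulVf // scale1r.
by rewrite -mulmxA Vh -/(hdot h _) hdotZr scalerA invfM invrK mulrAC mulfV // mul1r.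
Qed.
End HermitianForm.

Section Covariance.
Variable R : realType.
Local Notation C := R[i].
Variables (N : nat) (h0 h1 : 'cV[C]_N) (s0 s1 sn ac : R) (c1 : C).
Local Notation Rl := (covRl h0 h1 s0 s1 sn c1).

Lemma covRl_mul l v : Rl l *m v =
  (rc (s0 ^+ 2) * hdot h0 v + Num.conj c1 * hdot h1 v) *: h0
  + (c1 * hdot h0 v + rc (s1 ^+ 2 + l) * hdot h1 v) *: h1 + rc (sn ^+ 2) *: v.
Proof.
rewrite /covRl /covR !mulmxDl -!scalemxAl !hdot_outer mul1mx.
move: (hdot h0 v) (hdot h1 v) => p q.
by apply/matrixP => i j; rewrite !mxE rmorphD; ring.
Qed.

Lemma covRl0 : Rl 0 = covR h0 h1 s0 s1 sn c1.
Proof. by rewrite /covRl rmorph0 scale0r addr0. Qed.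

Lemma hdot_covRl l v : hdot v (Rl l *m v) =
  (rc (s0 ^+ 2) * hdot h0 v + Num.conj c1 * hdot h1 v) * Num.conj (hdot h0 v)
  + (c1 * hdot h0 v + rc (s1 ^+ 2 + l) * hdot h1 v) * Num.conj (hdot h1 v)
  + rc (sn ^+ 2) * hdot v v.
Proof. by rewrite covRl_mul !hdotDr !hdotZr -!(hdotC h0) -!(hdotC h1). Qed.

Lemma covRl_span l w x0 x1 : sn != 0 ->
  Rl l *m w = x0 *: h0 + x1 *: h1 -> exists a b, w = a *: h0 + b *: h1.
Proof.
move=> sn_neq0; rewrite covRl_mul.
set a := _ * hdot h0 w + _; set b := c1 * _ + _ => Rw.
have sn2_neq0 : rc (sn ^+ 2) != 0 by rewrite fmorph_eq0 expf_neq0.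
exists ((rc (sn ^+ 2))^-1 * (x0 - a)), ((rc (sn ^+ 2))^-1 * (x1 - b)).
apply: (scalerI sn2_neq0); rewrite scalerDr !scalerA !mulrA mulfV // !mul1r.
apply/matrixP => i j; move/matrixP/(_ i j): Rw; rewrite !mxE.
move: (rc _ * w i j) => t Rw.
by rewrite -[t](addKr (a * h0 i j + b * h1 i j)) Rw; ring.
Qed.

Lemma JMSE_distortionless w : hdot h0 w = 1 -> JMSE h0 h1 s0 s1 sn c1 w =
  complex.Re (rc (s1 ^+ 2) * (hdot w h1 * Num.conj (hdot w h1)) + rc (sn ^+ 2) * hdot w w).
Proof.
move=> h0w; rewrite /JMSE -mulmxA -covRl0.
rewrite -[(hermT w *m _) 0 0]/(hdot _ _) -[(hermT w *m xcorr _ _ _ _) 0 0]/(hdot _ _).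
rewrite -[(hermT (xcorr _ _ _ _) *m _) 0 0]/(hdot _ _) hdot_covRl /xcorr.
have wh0 : hdot w h0 = 1 by rewrite hdotC h0w conjC1.
rewrite hdotDr hdotDl !hdotZr !hdotZl (hdotC w h1) h0w wh0 conjC1 conj_rc addr0 conjCK.
have ReD x : complex.Re x + s0 ^+ 2 = complex.Re (x + rc (s0 ^+ 2)) by rewrite raddfD.
by rewrite ReD; congr complex.Re; ring.
Qed.

Hypotheses (s0_gt0 : 0 < s0) (sn_gt0 : 0 < sn) (ac_ge0 : 0 <= ac) (ac_le : ac <= s0 * s1)
  (c1_norm : c1 * Num.conj c1 = rc (ac ^+ 2)).

(* Completing the square, [s0^2 hdot v (R_l v)] is a sum of three nonnegative terms. *)
Lemma covRl_posdef l v : 0 <= l -> hdot v (Rl l *m v) = 0 -> v = 0.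
Proof.
move=> l0 vRv0.
set a := hdot h0 v; set b := hdot h1 v; set X := rc (s0 ^+ 2) * a + Num.conj c1 * b.
have key : rc (s0 ^+ 2) * hdot v (Rl l *m v) =
    X * Num.conj X + rc (s0 ^+ 2 * (s1 ^+ 2 + l) - ac ^+ 2) * (b * Num.conj b)
    + rc (s0 ^+ 2 * sn ^+ 2) * hdot v v.
  rewrite hdot_covRl -/a -/b /X rmorphB /= -c1_norm !rmorphD !rmorphM /=.
  by rewrite !conj_rc conjCK; ring.
move: key; rewrite vRv0 mulr0 => /esym /eqP.
have X_ge0 : 0 <= X * Num.conj X by apply: mul_conjC_ge0.
have b_ge0 : 0 <= rc (s0 ^+ 2 * (s1 ^+ 2 + l) - ac ^+ 2) * (b * Num.conj b).
  apply: mulr_ge0; last exact: mul_conjC_ge0.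
  rewrite /rc ler0c subr_ge0.
  have : ac ^+ 2 <= (s0 * s1) ^+ 2 by rewrite !expr2 ler_pM.
  have : 0 <= s0 ^+ 2 * l by rewrite mulr_ge0 ?sqr_ge0.
  rewrite mulrDr exprMn; lra.
have v_ge0 : 0 <= rc (s0 ^+ 2 * sn ^+ 2) * hdot v v.
  by rewrite mulr_ge0 ?hdotvv_ge0 // /rc ler0c mulr_ge0 ?sqr_ge0.
rewrite paddr_eq0 ?addr_ge0 // => /andP[_ /eqP].
move/eqP; rewrite mulf_eq0 fmorph_eq0 mulf_eq0 !expf_eq0 /=.
rewrite (gt_eqF s0_gt0) (gt_eqF sn_gt0) /=.
by move/eqP/hdotvv_eq0.
Qed.

Lemma covRl_unit l : 0 <= l -> Rl l \in unitmx.
Proof.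
move=> l0; apply: trivial_ker_unitmx => v Rv0.
by apply: (covRl_posdef l0); rewrite Rv0 hdot0r.
Qed.

Section UnitNormChannels.
Variable c2 : R.
Let z := hdot h0 h1.
Hypotheses (h0_unit : hdot h0 h0 = 1) (h1_unit : hdot h1 h1 = 1)
  (z_norm : z * Num.conj z = rc (1 - c2)) (c2_gt0 : 0 < c2).

Let h1_h0 : hdot h1 h0 = Num.conj z. Proof. exact: hdotC. Qed.

Let c2_neq0 : rc c2 != 0. Proof. by rewrite fmorph_eq0 gt_eqF. Qed.

Let gram_det : 1 - z * Num.conj z = rc c2.
Proof. by rewrite z_norm rmorphB rmorph1 /= opprB addrC subrK. Qed.

Lemma hdot_h0_span a b : hdot h0 (a *: h0 + b *: h1) = a + z * b.
Proof. by rewrite hdotDr !hdotZr h0_unit mulr1 mulrC. Qed.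

Lemma hdot_h1_span a b : hdot h1 (a *: h0 + b *: h1) = Num.conj z * a + b.
Proof. by rewrite hdotDr !hdotZr h1_unit h1_h0 mulr1 mulrC. Qed.

Lemma span_coord0 a b :
  a * rc c2 = hdot h0 (a *: h0 + b *: h1) - z * hdot h1 (a *: h0 + b *: h1).
Proof. by rewrite hdot_h0_span hdot_h1_span -gram_det; ring. Qed.

Lemma span_coord1 a b :
  b * rc c2 = hdot h1 (a *: h0 + b *: h1) - Num.conj z * hdot h0 (a *: h0 + b *: h1).
Proof. by rewrite hdot_h0_span hdot_h1_span -gram_det; ring. Qed.

Lemma span_eq0 a b : a *: h0 + b *: h1 = 0 -> a = 0 /\ b = 0.
Proof.
move=> ab0; have := span_coord0 a b; have := span_coord1 a b.
rewrite ab0 !hdot0r !mulr0 subr0 => /eqP + /eqP.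
by rewrite !mulf_eq0 (negbTE c2_neq0) !orbF => /eqP-> /eqP->.
Qed.

Let g l := l * c2 + (s1 ^+ 2 * c2 + sn ^+ 2).
Let a l := rc (sn ^+ 2 + (s1 ^+ 2 + l)) + c1 * z.
Let b l := - (c1 + rc (s1 ^+ 2 + l) * Num.conj z).
(* [R_l u_l] has no [h1] component, so [u_l] is proportional to [R_l^-1 h0]. *)
Let u l := a l *: h0 + b l *: h1.

Lemma g_gt0 l : 0 <= l -> 0 < g l.
Proof.
move=> l0; have := mulr_ge0 l0 (ltW c2_gt0).
have := mulr_ge0 (sqr_ge0 s1) (ltW c2_gt0); have := exprn_gt0 2 sn_gt0.
rewrite /g; lra.
Qed.

Lemma hdot_h0_u l : hdot h0 (u l) = rc (g l).
Proof.
rewrite hdot_h0_span /a /b.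
transitivity (rc (sn ^+ 2 + (s1 ^+ 2 + l)) - rc (s1 ^+ 2 + l) * (z * Num.conj z)).
  by ring.
by rewrite z_norm -rmorphM -rmorphB /g; congr rc; ring.
Qed.

Lemma hdot_h1_u l : hdot h1 (u l) = rc (sn ^+ 2) * Num.conj z - c1 * rc c2.
Proof.
rewrite hdot_h1_span /a /b -gram_det.
by rewrite !rmorphD; ring.
Qed.

Lemma covRl_u l : exists d, Rl l *m u l = d *: h0.
Proof.
have h1_coef :
    c1 * hdot h0 (u l) + rc (s1 ^+ 2 + l) * hdot h1 (u l) + rc (sn ^+ 2) * b l = 0.
  by rewrite hdot_h0_span hdot_h1_span /a /b !rmorphD; ring.
exists (rc (s0 ^+ 2) * hdot h0 (u l) + Num.conj c1 * hdot h1 (u l) + rc (sn ^+ 2) * a l).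
rewrite covRl_mul; move: h1_coef; set p := hdot h0 _; set q := hdot h1 _ => h1_coef.
apply/matrixP => i j; rewrite /u !mxE.
by rewrite -[RHS]addr0 -(mulr0 (h1 i j)) -h1_coef; ring.
Qed.

Lemma wRZF_eq l : 0 <= l -> wRZF h0 h1 s0 s1 sn c1 l = rc ((g l)^-1) *: u l.
Proof.
move=> l0; have [d Rud] := covRl_u l.
rewrite /wRZF (normalized_invmx_mul (covRl_unit l0) Rud) hdot_h0_u ?fmorphV //.
by rewrite fmorph_eq0 gt_eqF ?g_gt0.
Qed.

Lemma gram_unit :
  hermT (row_mx h0 h1) *m invmx (covR h0 h1 s0 s1 sn c1) *m row_mx h0 h1 \in unitmx.
Proof.
set X := row_mx h0 h1; apply: trivial_ker_unitmx => x Gx0.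
set y := invmx (covR h0 h1 s0 s1 sn c1) *m (X *m x).
have Ry : Rl 0 *m y = X *m x by rewrite covRl0 mulKVmx // -covRl0 covRl_unit.
have y0 : y = 0.
  apply: (covRl_posdef (lexx 0)); rewrite Ry /hdot mulmxA -[X]hermTK -hermTM.
  by rewrite /y !mulmxA Gx0 hermT0 mul0mx mxE.
have : X *m x = 0 by rewrite -Ry y0 mulmx0.
rewrite row_mx_mul => /span_eq0 [x0 x1].
rewrite -[x]vsubmxK; apply/eqP; rewrite col_mx_eq0.
by apply/andP; split; apply/eqP/matrixP => i j; rewrite !ord1 !mxE.
Qed.

Lemma JMSE_wZF : JMSE h0 h1 s0 s1 sn c1 (wZF h0 h1 s0 s1 sn c1) = sn ^+ 2 / c2.
Proof.
have R_unit : covR h0 h1 s0 s1 sn c1 \in unitmx by rewrite -covRl0 covRl_unit.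
set w := wZF _ _ _ _ _ _.
have Xw : hermT (row_mx h0 h1) *m w = delta_mx 0 0.
  by rewrite /w /wZF !mulmxA mulmxV ?gram_unit // mul1mx.
rewrite hermT_row_mx mul_col_mx in Xw.
have h0w : hdot h0 w = 1 by move/colP/(_ (lshift 1 0)): Xw; rewrite col_mxEu [RHS]mxE.
have h1w : hdot h1 w = 0 by move/colP/(_ (rshift 1 0)): Xw; rewrite col_mxEd [RHS]mxE.
have [p [q wE]] : exists p q, w = p *: h0 + q *: h1.
  apply: (@covRl_span 0 _ _ _ (lt0r_neq0 sn_gt0)).
  by rewrite covRl0 /w /wZF !mulmxA mulmxV // mul1mx -mulmxA row_mx_mul.
have p_c2 : p * rc c2 = 1 by rewrite (span_coord0 p q) -wE h0w h1w mulr0 subr0.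
have pE : p = rc c2^-1.
  by apply: (mulIf c2_neq0); rewrite p_c2 -rmorphM mulVf ?gt_eqF // rmorph1.
have ww : hdot w w = Num.conj p.
  by rewrite {1}wE hdotDl !hdotZl h0w h1w mulr1 mulr0 addr0.
rewrite JMSE_distortionless // ww (hdotC h1 w) h1w pE conj_rc conjC0 !mul0r mulr0 add0r.
by rewrite -rmorphM.
Qed.

Variable P : R.
Hypothesis c1z : c1 * z + Num.conj c1 * Num.conj z = rc (2 * P).

Lemma normsq_h1_u l : Num.conj (hdot h1 (u l)) * hdot h1 (u l) =
  rc ((sn ^+ 2) ^+ 2 * (1 - c2) - 2 * sn ^+ 2 * c2 * P + c2 ^+ 2 * ac ^+ 2).
Proof.
rewrite hdot_h1_u rmorphB !rmorphM /= !conj_rc conjCK.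
transitivity (rc (sn ^+ 2) * rc (sn ^+ 2) * (z * Num.conj z)
  - rc (sn ^+ 2) * rc c2 * (c1 * z + Num.conj c1 * Num.conj z)
  + rc c2 * rc c2 * (c1 * Num.conj c1)); first by ring.
rewrite z_norm c1z c1_norm.
by rewrite !(rmorphD, rmorphB, rmorphM, rmorphXn, rmorph1, rmorph_nat) /=; ring.
Qed.

Lemma hdot_u_u l : hdot (u l) (u l) = rc ((sn ^+ 2 + (s1 ^+ 2 + l)) * g l
  + 2 * (s1 ^+ 2 + l) * c2 * P + c2 * ac ^+ 2 - (s1 ^+ 2 + l) * sn ^+ 2 * (1 - c2)).
Proof.
rewrite {1}/u hdotDl !hdotZl hdot_h0_u hdot_h1_u /a /b.
transitivity (rc ((sn ^+ 2 + (s1 ^+ 2 + l)) * g l)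
  + rc ((s1 ^+ 2 + l) * c2) * (c1 * z + Num.conj c1 * Num.conj z)
  + rc c2 * (c1 * Num.conj c1) - rc ((s1 ^+ 2 + l) * sn ^+ 2) * (z * Num.conj z)).
  rewrite [Num.conj (rc _ + _)]rmorphD /= conj_rc [Num.conj (- _)]rmorphN /=.
  rewrite [Num.conj (_ + _)]rmorphD /= [Num.conj (rc _ * _)]rmorphM /= conj_rc conjCK.
  by rewrite /g !(rmorphD, rmorphM) /=; ring.
rewrite z_norm c1z c1_norm /g.
by rewrite !(rmorphD, rmorphB, rmorphM, rmorphXn, rmorph1, rmorph_nat) /=; ring.
Qed.

Lemma MSE_rational l : 0 <= l -> MSE h0 h1 s0 s1 sn c1 l =
  ((sn ^+ 2) ^+ 2 * (1 - c2) - 2 * sn ^+ 2 * c2 * P + c2 ^+ 2 * ac ^+ 2) / c2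
    * (s1 ^+ 2 * c2 + sn ^+ 2) / (l * c2 + (s1 ^+ 2 * c2 + sn ^+ 2)) ^+ 2
  - 2 * (sn ^+ 2 * (sn ^+ 2 * (1 - c2) / c2 - P)) / (l * c2 + (s1 ^+ 2 * c2 + sn ^+ 2))
  + sn ^+ 2 / c2.
Proof.
move=> l0; have g_neq0 : l * c2 + (s1 ^+ 2 * c2 + sn ^+ 2) != 0 := lt0r_neq0 (g_gt0 l0).
rewrite /MSE wRZF_eq // JMSE_distortionless; last first.
  by rewrite hdotZr hdot_h0_u -rmorphM mulVf // rmorph1.
rewrite !hdotZl !hdotZr (conj_rc ((g l)^-1)) (hdotC h1 (u l)) [Num.conj (_ * _)]rmorphM /=.
rewrite (conj_rc ((g l)^-1)) conjCK hdot_u_u.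
transitivity (complex.Re
  (rc (s1 ^+ 2 * (g l)^-1 * (g l)^-1) * (Num.conj (hdot h1 (u l)) * hdot h1 (u l))
   + rc (sn ^+ 2 * (g l)^-1 * (g l)^-1) * rc ((sn ^+ 2 + (s1 ^+ 2 + l)) * g l
     + 2 * (s1 ^+ 2 + l) * c2 * P + c2 * ac ^+ 2 - (s1 ^+ 2 + l) * sn ^+ 2 * (1 - c2)))).
  by congr complex.Re; rewrite !rmorphM /=; ring.
rewrite normsq_h1_u /= !mul0r !subr0 /g.
by field; rewrite g_neq0 gt_eqF.
Qed.
End UnitNormChannels.
End Covariance.

Section RationalProfile.
Variable R : realType.
Variables (m A B K c : R) (f : R -> R).
Hypotheses (A_gt0 : 0 < A) (c_gt0 : 0 < c).
Hypothesis fE : forall l, 0 <= l ->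
  f l = m * A / (l * c + A) ^+ 2 - 2 * B / (l * c + A) + K.

Lemma profile_den_ge l : 0 <= l -> A <= l * c + A.
Proof. by move=> l0; rewrite lerDr mulr_ge0 // ltW. Qed.

Lemma profile_den_gt0 l : 0 <= l -> 0 < l * c + A.
Proof. by move=> l0; exact: lt_le_trans A_gt0 (profile_den_ge l0). Qed.

Lemma profile_den_ltV x y : 0 <= x -> x < y -> (y * c + A)^-1 < (x * c + A)^-1.
Proof.
move=> x0 xy; have y0 : 0 <= y by rewrite (le_trans x0) ?ltW.
by rewrite ltf_pV2 ?posrE ?profile_den_gt0 // ltrD2r ltr_pM2r.
Qed.

(* In the variable [u = 1 / (l c + A)] the profile is the parabola [m A u^2 - 2 B u + K]. *)
Lemma profile_sub x y : 0 <= x -> 0 <= y ->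
  f x - f y = ((x * c + A)^-1 - (y * c + A)^-1)
              * (m * A * ((x * c + A)^-1 + (y * c + A)^-1) - 2 * B).
Proof.
move=> x0 y0; rewrite !fE //.
by field; rewrite !gt_eqF ?profile_den_gt0.
Qed.

Lemma profile_cvg : f l @[l --> +oo] --> K.
Proof.
have u0 : (l * c + A)^-1 @[l --> +oo] --> 0.
  apply/gtr0_cvgV0.
    near=> l; apply: profile_den_gt0.
    by near: l; apply: nbhs_pinfty_ge; rewrite num_real.
  apply/cvgryPger => M _; near=> l.
  have : M / c <= l by near: l; apply: nbhs_pinfty_ge; rewrite num_real.
  by rewrite ler_pdivrMr // => Ml; have := ltW A_gt0; lra.
have poly_cvg : m * A * ((l * c + A)^-1 * (l * c + A)^-1) - 2 * B * (l * c + A)^-1 + K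
    @[l --> +oo] --> m * A * (0 * 0) - 2 * B * 0 + K.
  exact: cvgD (cvgB (cvgM (cvg_cst _) (cvgM u0 u0)) (cvgM (cvg_cst _) u0)) (cvg_cst _).
rewrite !(mulr0, oppr0, add0r) in poly_cvg.
suff near_f : \forall l \near +oo,
    m * A * ((l * c + A)^-1 * (l * c + A)^-1) - 2 * B * (l * c + A)^-1 + K = f l.
  exact: cvg_trans (near_eq_cvg near_f) poly_cvg.
near=> l; have l0 : 0 <= l by near: l; apply: nbhs_pinfty_ge; rewrite num_real.
by rewrite fE // -exprVn expr2.
Unshelve. all: end_near. Qed.

Hypothesis m_gt0 : 0 < m.

Lemma profile_decreasing : B / m <= 0 -> forall x y, 0 <= x -> x < y -> f y < f x.
Proof.
rewrite pmulr_lle0 ?invr_gt0 // => B0 x y x0 xy.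
have y0 : 0 <= y by rewrite (le_trans x0) ?ltW.
rewrite -subr_gt0 profile_sub // mulr_gt0 ?subr_gt0 ?profile_den_ltV //.
have : 0 < m * A * ((x * c + A)^-1 + (y * c + A)^-1).
  by rewrite !mulr_gt0 ?addr_gt0 ?invr_gt0 ?profile_den_gt0.
lra.
Qed.

Lemma profile_increasing : 1 <= B / m -> forall x y, 0 <= x -> x < y -> f x < f y.
Proof.
rewrite ler_pdivlMr // mul1r => mB x y x0 xy.
have y0 : 0 <= y by rewrite (le_trans x0) ?ltW.
rewrite -subr_lt0 profile_sub // pmulr_rlt0 ?subr_gt0 ?profile_den_ltV //.
have Vle l : 0 <= l -> A * (l * c + A)^-1 <= 1.
  by move=> l0; rewrite mulrC ler_pdivrMl ?profile_den_gt0 // mulr1 profile_den_ge.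
have yx : A * (y * c + A)^-1 < A * (x * c + A)^-1.
  by rewrite ltr_pM2l // profile_den_ltV.
have : m * (A * (x * c + A)^-1 + A * (y * c + A)^-1) < m * 2.
  by rewrite ltr_pM2l //; have := Vle _ x0; lra.
rewrite mulrDr !mulrA; lra.
Qed.

Lemma profile_min_at0 : 1 <= B / m -> forall l, 0 <= l -> f 0 <= f l.
Proof.
move=> gam_ge1 l; rewrite le_eqVlt => /predU1P[<-|l_gt0]; first exact: lexx.
exact/ltW/profile_increasing.
Qed.

Lemma profile_argmin : 0 < B / m < 1 ->
  let lopt := A / c * ((1 - B / m) / (B / m)) in
  0 < lopt /\ forall l, 0 <= l -> f lopt <= f l.
Proof.
rewrite pmulr_lgt0 ?invr_gt0 // ltr_pdivrMr // mul1r => /andP[B_gt0 Bm] lopt.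
have lopt_gt0 : 0 < lopt.
  by rewrite !mulr_gt0 ?invr_gt0 ?divr_gt0 // subr_gt0 ltr_pdivrMr // mul1r.
have denV : (lopt * c + A)^-1 = B / (m * A).
  rewrite /lopt; field.
  by rewrite !gt_eqF //= -mulrDr subrK mulr_gt0.
split=> // l l0; rewrite -subr_ge0 profile_sub ?(ltW lopt_gt0) // denV.
set u := (l * c + A)^-1.
have -> : (u - B / (m * A)) * (m * A * (u + B / (m * A)) - 2 * B)
          = m * A * (u - B / (m * A)) ^+ 2.
  by field; rewrite !gt_eqF.
by rewrite mulr_ge0 ?sqr_ge0 // ltW // mulr_gt0.
Qed.

Lemma profile_inf : B / m <= 0 -> inf [set f l | l in [set l : R | 0 <= l]] = K.
Proof.
rewrite pmulr_lle0 ?invr_gt0 // => B0; set S := [set f l | l in _].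
have lbK : lbound S K.
  move=> _ [l /= l0 <-]; rewrite fE //.
  have : 0 <= m * A / (l * c + A) ^+ 2.
    by rewrite divr_ge0 ?sqr_ge0 // mulr_ge0 // ltW.
  have : B / (l * c + A) <= 0 by rewrite pmulr_lle0 // invr_gt0 profile_den_gt0.
  lra.
apply/eqP; rewrite eq_le; apply/andP; split; last first.
  by apply: lb_le_inf lbK; exists (f 0), 0 => /=.
apply: (ler_cvg_to (cvg_cst (inf S)) profile_cvg); near=> l.
apply: ge_inf; first by exists K.
by exists l => //=; near: l; apply: nbhs_pinfty_ge; rewrite num_real.
Unshelve. all: end_near. Qed.
End RationalProfile.

Section PolarParameters.
Variable R : realType.
Variables (N : nat) (h0 h1 : 'cV[R[i]]_N) (tau phiz s0 s1 sn ac phic : R).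
Hypotheses (h0_unit : hdot h0 h0 = 1) (h1_unit : hdot h1 h1 = 1)
  (h01 : hdot h0 h1 = rc (sin tau) * expi phiz) (cos_gt0 : 0 < cos tau)
  (s0_gt0 : 0 < s0) (sn_gt0 : 0 < sn) (ac_ge0 : 0 <= ac) (ac_le : ac <= s0 * s1).

Let c1_norm : rc ac * expi phic * Num.conj (rc ac * expi phic) = rc (ac ^+ 2).
Proof. exact: polar_mulconj. Qed.

Let z_norm : hdot h0 h1 * Num.conj (hdot h0 h1) = rc (1 - cos tau ^+ 2).
Proof. by rewrite h01 polar_mulconj sin2cos2. Qed.

Let cos2_gt0 : 0 < cos tau ^+ 2. Proof. exact: exprn_gt0. Qed.

Let cos2V : sn ^+ 2 / cos tau ^+ 2 = sn ^+ 2 * (tan tau ^+ 2 + 1).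
Proof. by rewrite addrC -cos2_tan2 ?lt0r_neq0. Qed.

Lemma MSE_polar :
  let d1 := sn ^+ 2 * tan tau - ac * cos tau * cos (phic + phiz) in
  let d2 := rc (sn ^+ 2 * tan tau) - rc (ac * cos tau) * expi (phic + phiz) in
  let A := s1 ^+ 2 * cos tau ^+ 2 + sn ^+ 2 in
  forall l, 0 <= l -> MSE h0 h1 s0 s1 sn (rc ac * expi phic) l =
    modc d2 ^+ 2 * A / (l * cos tau ^+ 2 + A) ^+ 2
    - 2 * (sn ^+ 2 * d1 * tan tau) / (l * cos tau ^+ 2 + A)
    + sn ^+ 2 * (tan tau ^+ 2 + 1).
Proof.
move=> d1 d2 A l l0.
have c1z := polar_addconj ac phic (sin tau) phiz; rewrite -h01 in c1z.
rewrite (MSE_rational s0_gt0 sn_gt0 ac_ge0 ac_le c1_norm h0_unit h1_unit z_norm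
  cos2_gt0 c1z l0).
have sinE : sin tau = tan tau * cos tau by rewrite divfK ?lt0r_neq0.
have cosE : 1 - cos tau ^+ 2 = tan tau ^+ 2 * cos tau ^+ 2.
  by rewrite -sin2cos2 sinE exprMn.
rewrite /d1 /d2 /A modc_sub_polar cosE sinE -cos2V.
field; rewrite lt0r_neq0 //= lt0r_neq0 //.
have := exprn_gt0 2 sn_gt0; have := sqr_ge0 (s1 * cos tau).
have := mulr_ge0 l0 (ltW cos2_gt0); lra.
Qed.

Lemma JMSE_wZF_polar :
  JMSE h0 h1 s0 s1 sn (rc ac * expi phic) (wZF h0 h1 s0 s1 sn (rc ac * expi phic))
  = sn ^+ 2 * (tan tau ^+ 2 + 1).
Proof.
by rewrite -cos2V (JMSE_wZF s0_gt0 sn_gt0 ac_ge0 ac_le c1_norm h0_unit h1_unit z_norm).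
Qed.
End PolarParameters.

Unset Implicit Arguments.

Theorem theorem3 (R : realType) (N : nat) (h0 h1 : 'cV[R[i]]_N)
  (tau phiz s0 s1 sn ac phic : R) :
  (2 <= N)%N ->
  (hermT h0 *m h0) 0 0 = 1 -> (hermT h1 *m h1) 0 0 = 1 ->
  (hermT h0 *m h1) 0 0 = rc (sin tau) * expi phiz ->
  0 <= tau < pi / 2 -> 0 <= phiz < 2 * pi ->
  0 < s0 -> 0 < s1 -> 0 < sn ->
  0 <= ac -> ac <= s0 * s1 -> 0 <= phic < 2 * pi ->
  let c1 := rc ac * expi phic in
  let M := MSE h0 h1 s0 s1 sn c1 in
  let ct2 := cos tau ^+ 2 in
  let g := fun l : R => l * ct2 + s1 ^+ 2 * ct2 + sn ^+ 2 in
  let d1 := sn ^+ 2 * tan tau - ac * cos tau * cos (phic + phiz) in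
  let d2 := rc (sn ^+ 2 * tan tau) - rc (ac * cos tau) * expi (phic + phiz) in
  [/\ (* closed form *)
      (forall l, 0 <= l ->
         M l = modc d2 ^+ 2 * (s1 ^+ 2 * ct2 + sn ^+ 2) / g l ^+ 2
               - 2 * sn ^+ 2 * d1 * tan tau / g l
               + sn ^+ 2 * (tan tau ^+ 2 + 1)),
      (* case 1 *)
      (d2 = 0 -> d1 = 0 /\ forall l, 0 <= l -> M l = sn ^+ 2 * (tan tau ^+ 2 + 1)) &
      (* case 2 *)
      (d2 != 0 ->
        let gam := d1 * sn ^+ 2 * tan tau / modc d2 ^+ 2 in
        [/\ (gam <= 0 <-> d1 * tan tau <= 0),
            (gam <= 0 ->
               (forall x y, 0 <= x -> x < y -> M y < M x) /\
               (M l @[l --> +oo] --> JMSE h0 h1 s0 s1 sn c1 (wZF h0 h1 s0 s1 sn c1)) /\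
               inf [set M l | l in [set l : R | 0 <= l]]
                 = JMSE h0 h1 s0 s1 sn c1 (wZF h0 h1 s0 s1 sn c1)),
            (1 <= gam ->
               (forall x y, 0 <= x -> x < y -> M x < M y) /\
               (forall l, 0 <= l -> M 0 <= M l)) &
            (0 < gam < 1 ->
               let lopt := (s1 ^+ 2 * ct2 + sn ^+ 2) / ct2 * ((1 - gam) / gam) in
               0 < lopt /\ forall l, 0 <= l -> M lopt <= M l)])].
Proof.
move=> _ h0_unit h1_unit h01 /andP[tau_ge0 tau_lt] _ s0_gt0 _ sn_gt0 ac_ge0 ac_le _.
move=> c1 M ct2 g d1 d2.
have cos_gt0 : 0 < cos tau.
  apply: cos_gt0_pihalf; rewrite tau_lt andbT (lt_le_trans _ tau_ge0) //.
  by rewrite oppr_lt0 divr_gt0 ?pi_gt0.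
have ct2_gt0 : 0 < ct2 := exprn_gt0 2 cos_gt0.
set A := s1 ^+ 2 * ct2 + sn ^+ 2.
have A_gt0 : 0 < A.
  by have := mulr_ge0 (sqr_ge0 s1) (ltW ct2_gt0); have := exprn_gt0 2 sn_gt0; rewrite /A; lra.
have fE : forall l, 0 <= l -> M l = modc d2 ^+ 2 * A / (l * ct2 + A) ^+ 2
    - 2 * (sn ^+ 2 * d1 * tan tau) / (l * ct2 + A) + sn ^+ 2 * (tan tau ^+ 2 + 1).
  exact: MSE_polar h0_unit h1_unit h01 cos_gt0 s0_gt0 sn_gt0 ac_ge0 ac_le.
rewrite (JMSE_wZF_polar phic h0_unit h1_unit h01 cos_gt0 s0_gt0 sn_gt0 ac_ge0 ac_le).
split.
- by move=> l l0; rewrite fE // /g /A addrA !mulrA.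
- move=> d2_0; have d1_0 : d1 = 0 by rewrite /d1 -Re_sub_polar -/d2 d2_0.
  split=> // l l0; rewrite fE // d2_0 d1_0 /modc normr0 /=; ring.
move=> d2_neq0 gam; rewrite /gam (mulrC d1).
have m_gt0 : 0 < modc d2 ^+ 2.
  by rewrite exprn_gt0 //; move: (normr_gt0 d2); rewrite d2_neq0 ltcE => /andP[].
split.
- by rewrite pmulr_lle0 ?invr_gt0 // -mulrA pmulr_rle0 ?exprn_gt0.
- move=> gam_le0; split; first exact: profile_decreasing A_gt0 ct2_gt0 fE m_gt0 gam_le0.
  split; first exact: profile_cvg A_gt0 ct2_gt0 fE.
  exact: profile_inf A_gt0 ct2_gt0 fE m_gt0 gam_le0.
- move=> gam_ge1; split; first exact: profile_increasing A_gt0 ct2_gt0 fE m_gt0 gam_ge1.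
  exact: profile_min_at0 A_gt0 ct2_gt0 fE m_gt0 gam_ge1.
- exact: profile_argmin A_gt0 ct2_gt0 fE m_gt0.
Qed.
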